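(* For every $n\ge1$, no proper subset of $F_n$ that contains both $a_1$ and $a_{5n+3}$ is full. Consequently (since $F_n$ is full) the geodesic between $a_1$ and $a_{5n+3}$ in $F_n$, i.e. the smallest full subset of $F_n$ containing both points, is all of $F_n$, which has $5n+4$ points.
   Context: Let $X_1,X_2,X_3$ be pairwise disjoint nonempty sets and $\Omega=X_1\times X_2\times X_3$, with projections $\Pi_i:\Omega\to X_i$. A set $S\subset\Omega$ is good if every function $f:S\to\mathbb C$ can be written $f(w_1,w_2,w_3)=u_1(w_1)+u_2(w_2)+u_3(w_3)$ for all $(w_1,w_2,w_3)\in S$, for some functions $u_i:X_i\to\mathbb C$. A set $S$ is full if it is a maximal good subset of $\Pi_1S\times\Pi_2S\times\Pi_3S$. Construction: fix pairwise distinct elements $x_1,y_1,\alpha_{5k-4},\alpha_{5k-1}$ ($k\ge1$) of $X_1$; pairwise distinct elements $x_2,y_2,\alpha_{5k-3},\alpha_{5k}$ ($k\ge1$) of $X_2$; pairwise distinct elements $x_3,z_3,\alpha_{5k-2}$ ($k\ge1$) of $X_3$. Set the convention $\alpha_{-3}:=y_2$, $\alpha_{-2}:=z_3$. Define $a_1=(x_1,x_2,x_3)$, $a_2=(y_1,y_2,x_3)$, $a_3=(y_1,x_2,z_3)$ and for $n\ge1$: $a_{5n-1}=(\alpha_{5n-4},\alpha_{5n-3},\alpha_{5n-2})$, $a_{5n}=(\alpha_{5n-1},\alpha_{5n},\alpha_{5n-2})$, $a_{5n+1}=(\alpha_{5n-4},\alpha_{5n},\alpha_{5n-7})$, $a_{5n+2}=(\alpha_{5n-1},\alpha_{5n-3},x_3)$,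 $a_{5n+3}=(x_1,\alpha_{5n-8},\alpha_{5n-2})$. Let $D_n=\{a_1,\dots,a_{5n+3}\}$, $b_n=(\alpha_{5n-1},y_2,z_3)$ and $F_n=D_n\cup\{b_n\}$. *)

From Stdlib Require Import Reals Arith.
Open Scope R_scope.

(* The complex numbers, as the additive group R x R (goodness only uses
   addition of complex numbers). *)
Definition C : Type := (R * R)%type.
Definition Cadd (z w : C) : C := (fst z + fst w, snd z + snd w).

Section Sets.
Context {X1 X2 X3 : Type}.
Definition Omega : Type := (X1 * X2 * X3)%type.
Definition P1 (w : Omega) : X1 := fst (fst w).
Definition P2 (w : Omega) : X2 := snd (fst w).
Definition P3 (w : Omega) : X3 := snd w.

Definition subset (S T : Omega -> Prop) : Prop := forall w, S w -> T w.

Definition good (S : Omega -> Prop) : Prop :=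
  forall f : {w : Omega | S w} -> C,
    exists (u1 : X1 -> C) (u2 : X2 -> C) (u3 : X3 -> C),
      forall w : {w : Omega | S w},
        f w = Cadd (Cadd (u1 (P1 (proj1_sig w))) (u2 (P2 (proj1_sig w))))
                   (u3 (P3 (proj1_sig w))).

Definition box (S : Omega -> Prop) (w : Omega) : Prop :=
  (exists v, S v /\ P1 v = P1 w) /\
  (exists v, S v /\ P2 v = P2 w) /\
  (exists v, S v /\ P3 v = P3 w).

Definition full (S : Omega -> Prop) : Prop :=
  good S /\
  forall T : Omega -> Prop, good T -> subset S T -> subset T (box S) -> subset T S.
End Sets.

(* The elements alpha_k (k >= 1) are encoded as
     alpha_{5k-4} = al1 k, alpha_{5k-1} = al4 k   (in X1)
     alpha_{5k-3} = al2 k, alpha_{5k}   = al5 k   (in X2)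
     alpha_{5k-2} = al3 k                          (in X3)
   for k >= 1 (values at k = 0 are irrelevant). *)
Record config (X1 X2 X3 : Type) := Config {
  x1 : X1; y1 : X1; x2 : X2; y2 : X2; x3 : X3; z3 : X3;
  al1 : nat -> X1; al4 : nat -> X1;
  al2 : nat -> X2; al5 : nat -> X2;
  al3 : nat -> X3 }.
Arguments Config {X1 X2 X3}.
Arguments x1 {X1 X2 X3}. Arguments y1 {X1 X2 X3}.
Arguments x2 {X1 X2 X3}. Arguments y2 {X1 X2 X3}.
Arguments x3 {X1 X2 X3}. Arguments z3 {X1 X2 X3}.
Arguments al1 {X1 X2 X3}. Arguments al4 {X1 X2 X3}.
Arguments al2 {X1 X2 X3}. Arguments al5 {X1 X2 X3}.
Arguments al3 {X1 X2 X3}.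

Definition config_ok {X1 X2 X3 : Type} (c : config X1 X2 X3) : Prop :=
  x1 c <> y1 c /\
  (forall k, (1 <= k)%nat -> al1 c k <> x1 c /\ al1 c k <> y1 c /\
                             al4 c k <> x1 c /\ al4 c k <> y1 c) /\
  (forall k l, (1 <= k)%nat -> (1 <= l)%nat ->
     al1 c k <> al4 c l /\ (al1 c k = al1 c l -> k = l) /\ (al4 c k = al4 c l -> k = l)) /\
  x2 c <> y2 c /\
  (forall k, (1 <= k)%nat -> al2 c k <> x2 c /\ al2 c k <> y2 c /\
                             al5 c k <> x2 c /\ al5 c k <> y2 c) /\
  (forall k l, (1 <= k)%nat -> (1 <= l)%nat ->
     al2 c k <> al5 c l /\ (al2 c k = al2 c l -> k = l) /\ (al5 c k = al5 c l -> k = l)) /\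
  x3 c <> z3 c /\
  (forall k, (1 <= k)%nat -> al3 c k <> x3 c /\ al3 c k <> z3 c) /\
  (forall k l, (1 <= k)%nat -> (1 <= l)%nat -> al3 c k = al3 c l -> k = l).

Section Construction.
Context {X1 X2 X3 : Type} (c : config X1 X2 X3).

(* alpha_{5n-7} (in X3), with alpha_{-2} = z3 *)
Definition alpha_5n_7 (n : nat) : X3 :=
  match n with 0 | 1 => z3 c | S m => al3 c m end.
(* alpha_{5n-8} (in X2), with alpha_{-3} = y2 *)
Definition alpha_5n_8 (n : nat) : X2 :=
  match n with 0 | 1 => y2 c | S m => al2 c m end.

(* the five points a_{5n-1}, a_{5n}, a_{5n+1}, a_{5n+2}, a_{5n+3}
   for j = 0,1,2,3,4 respectively (n >= 1) *)
Definition a_block (n j : nat) : @Omega X1 X2 X3 :=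
  match j with
  | 0 => (al1 c n, al2 c n, al3 c n)
  | 1 => (al4 c n, al5 c n, al3 c n)
  | 2 => (al1 c n, al5 c n, alpha_5n_7 n)
  | 3 => (al4 c n, al2 c n, x3 c)
  | _ => (x1 c, alpha_5n_8 n, al3 c n)
  end.

(* a_m for m >= 1 (a_0 is a dummy value) *)
Definition a (m : nat) : @Omega X1 X2 X3 :=
  match m with
  | 0 | 1 => (x1 c, x2 c, x3 c)
  | 2 => (y1 c, y2 c, x3 c)
  | 3 => (y1 c, x2 c, z3 c)
  | _ => a_block (S ((m - 4) / 5)) ((m - 4) mod 5)
  end.

Definition D (n : nat) (w : @Omega X1 X2 X3) : Prop :=
  exists m, (1 <= m <= 5 * n + 3)%nat /\ w = a m.

Definition b (n : nat) : @Omega X1 X2 X3 := (al4 c n, y2 c, z3 c).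

Definition F (n : nat) (w : @Omega X1 X2 X3) : Prop := D n w \/ w = b n.
End Construction.

(* Goodness is linear algebra in disguise: S is good iff every real function on S
   is the restriction of a functional p(w) = g1(w1) + g2(w2) + g3(w3) (a complex
   function is handled through its real and imaginary parts).  Two operations
   preserve goodness:
   - adding a point t on which some functional vanishing on S is nonzero;
   - exchanging w0 in S for a point t that is a linear combination of points
     of S (as seen by every functional) with nonzero coefficient at w0.
   For the construction, D_k is good (each new block of five points is added
   with explicit separating functionals), and the auxiliary point
   t_k = (x1, x2, alpha_{5k-2}) is a combination of D_k in which every
   "swappable" point -- all of D_k except a_1 and the a_{5i+3}, i >= 2 -- has
   nonzero coefficient; hence D_k - w + t_k is good for swappable w.
   If P is full, a_1, a_{5n+3} are in P and P is contained in F_n, then P contains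
   every swappable point (otherwise P + t_n sits in the good set
   (D_n - w + t_n) + b_n), and then all of F_n: a missing a_{5k+8} or b_n makes
   the functional psi_k vanish on P, so P could absorb the point
   (alpha_{5k-4}, x2, x3) of its box. *)

From Pilot Require Import Defs.
From Stdlib Require Import Reals Arith List Lia Lra Classical ClassicalEpsilon.
Import ListNotations.
Open Scope R_scope.

Section LinearCombinations.
Context {T : Type}.

Definition indic (v x : T) : R := if excluded_middle_informative (x = v) then 1 else 0.

Lemma indic_eq (v : T) : indic v v = 1.
Proof. unfold indic. destruct (excluded_middle_informative (v = v)); [reflexivity | congruence]. Qed.

Lemma indic_neq (v x : T) : x <> v -> indic v x = 0.
Proof. intros Hne. unfold indic. destruct (excluded_middle_informative (x = v)); [congruence | reflexivity]. Qed.

Definition lincomb (v : T -> R) (L : list (R * T)) : R :=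
  fold_right (fun cq s => fst cq * v (snd cq) + s) 0 L.

Definition coeff (L : list (R * T)) (w : T) : R := lincomb (indic w) L.

Definition lscale (l : R) (L : list (R * T)) : list (R * T) :=
  map (fun cq => (l * fst cq, snd cq)) L.

Definition ldrop (w : T) (L : list (R * T)) : list (R * T) :=
  filter (fun cq => if excluded_middle_informative (snd cq = w) then false else true) L.

Lemma lincomb_app v L1 L2 : lincomb v (L1 ++ L2) = lincomb v L1 + lincomb v L2.
Proof. induction L1 as [|[c q] L1 IH]; simpl; [ring | rewrite IH; ring]. Qed.

Lemma lincomb_scale v l L : lincomb v (lscale l L) = l * lincomb v L.
Proof. induction L as [|[c q] L IH]; simpl; [ring | rewrite IH; ring]. Qed.

Lemma lincomb_ext v v' L :
  (forall cq, In cq L -> v (snd cq) = v' (snd cq)) -> lincomb v L = lincomb v' L.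
Proof.
  induction L as [|[c q] L IH]; intros Hvv; simpl; [reflexivity|].
  rewrite (Hvv (c, q) (or_introl eq_refl) : v q = v' q), IH; [reflexivity|].
  intros cq Hin; apply Hvv; right; exact Hin.
Qed.

Lemma lincomb_split v L w : lincomb v L = coeff L w * v w + lincomb v (ldrop w L).
Proof.
  unfold coeff. induction L as [|[c q] L IH]; simpl; [ring|].
  destruct (excluded_middle_informative (q = w)) as [->|Hne]; simpl.
  - rewrite indic_eq, IH. ring.
  - rewrite indic_neq by assumption. rewrite IH. ring.
Qed.

Lemma In_ldrop cq w L : In cq (ldrop w L) -> In cq L /\ snd cq <> w.
Proof.
  unfold ldrop. rewrite filter_In.
  destruct (excluded_middle_informative (snd cq = w)); intuition discriminate.
Qed.

Lemma coeff_notin L w : (forall cq, In cq L -> snd cq <> w) -> coeff L w = 0.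
Proof.
  intros Hne. unfold coeff. rewrite (lincomb_ext _ (fun _ => 0)).
  - clear Hne. induction L as [|[c q] L IH]; simpl; [reflexivity|].
    fold (lincomb (fun _ : T => 0) L). rewrite IH; ring.
  - intros cq Hin. apply indic_neq, Hne, Hin.
Qed.

End LinearCombinations.
Arguments indic {T} v x : simpl never.

Section Goodness.
Context {X1 X2 X3 : Type}.
Notation Om := (@Omega X1 X2 X3).

Record fn := Fn { g1 : X1 -> R; g2 : X2 -> R; g3 : X3 -> R }.

Definition evR (p : fn) (w : Om) : R := g1 p (P1 w) + g2 p (P2 w) + g3 p (P3 w).

Definition fn_axpy (l : R) (p q : fn) : fn :=
  Fn (fun x => l * g1 p x + g1 q x) (fun x => l * g2 p x + g2 q x) (fun x => l * g3 p x + g3 q x).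

Lemma evR_axpy l p q w : evR (fn_axpy l p q) w = l * evR p w + evR q w.
Proof. unfold evR; simpl; ring. Qed.

Definition goodR (S : Om -> Prop) : Prop :=
  forall f : Om -> R, exists p : fn, forall w, S w -> f w = evR p w.

Lemma goodR_good (S : Om -> Prop) : goodR S -> good S.
Proof.
  intros HS f.
  set (part := fun (pr : Defs.C -> R) (w : Om) =>
    match excluded_middle_informative (S w) with
    | left Hw => pr (f (exist _ w Hw)) | right _ => 0 end).
  destruct (HS (part fst)) as [p Hp]. destruct (HS (part snd)) as [q Hq].
  exists (fun x => (g1 p x, g1 q x)), (fun x => (g2 p x, g2 q x)), (fun x => (g3 p x, g3 q x)).
  intros [w Hw]. simpl. specialize (Hp w Hw). specialize (Hq w Hw).
  unfold part, evR in Hp, Hq.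
  destruct (excluded_middle_informative (S w)) as [Hw'|]; [|contradiction].
  rewrite (proof_irrelevance _ Hw' Hw) in Hp, Hq.
  destruct (f (exist _ w Hw)) as [re im]. unfold Cadd. simpl in *. congruence.
Qed.

Lemma good_goodR (S : Om -> Prop) : good S -> goodR S.
Proof.
  intros HS f.
  destruct (HS (fun w => (f (proj1_sig w), 0))) as (u1 & u2 & u3 & Hu).
  exists (Fn (fun x => fst (u1 x)) (fun x => fst (u2 x)) (fun x => fst (u3 x))).
  intros w Hw. specialize (Hu (exist _ w Hw)). apply (f_equal fst) in Hu. exact Hu.
Qed.

Lemma goodR_empty : goodR (fun _ : Om => False).
Proof. intros f. exists (Fn (fun _ => 0) (fun _ => 0) (fun _ => 0)). intros w []. Qed.

Lemma goodR_mono (S T : Om -> Prop) : (forall w, T w -> S w) -> goodR S -> goodR T.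
Proof. intros HTS HS f. destruct (HS f) as [p Hp]. exists p. auto. Qed.

Lemma goodR_add (S : Om -> Prop) (t : Om) (p : fn) :
  goodR S -> (forall w, S w -> evR p w = 0) -> evR p t <> 0 ->
  goodR (fun w => S w \/ w = t).
Proof.
  intros HS Hvan Ht f. destruct (HS f) as [q Hq].
  exists (fn_axpy ((f t - evR q t) / evR p t) p q).
  intros w [Hw | ->]; rewrite evR_axpy.
  - rewrite (Hvan w Hw), (Hq w Hw). ring.
  - field. exact Ht.
Qed.

(* S enlarged by the points of a list, the head being the last point added. *)
Definition extend (S : Om -> Prop) (L : list Om) : Om -> Prop := fun w => S w \/ In w L.

Lemma goodR_extend (S : Om -> Prop) (L : list Om) (t : Om) (p : fn) :
  goodR (extend S L) -> (forall w, S w -> evR p w = 0) -> (forall w, In w L -> evR p w = 0) ->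
  evR p t <> 0 -> goodR (extend S (t :: L)).
Proof.
  intros HS HvS HvL Ht. apply goodR_mono with (S := fun w => extend S L w \/ w = t).
  - intros w [Hw | [<- | Hw]]; [left; left | right | left; right]; auto.
  - apply goodR_add with (p := p); [exact HS | intros w [Hw | Hw]; auto | exact Ht].
Qed.
Definition spans (S : Om -> Prop) (t : Om) (L : list (R * Om)) : Prop :=
  (forall cq, In cq L -> S (snd cq)) /\ forall p, evR p t = lincomb (evR p) L.

Definition exch (S : Om -> Prop) (w0 t : Om) : Om -> Prop :=
  fun w => (S w /\ w <> w0) \/ w = t.

(* Exchange lemma: the values of a functional at w0 are forced by its values on
   S - w0 + t, so any function there can be extended to S. *)
Lemma goodR_exch (S : Om -> Prop) (t w0 : Om) (L : list (R * Om)) :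
  goodR S -> spans S t L -> coeff L w0 <> 0 -> goodR (exch S w0 t).
Proof.
  intros HS [Hsupp Hrel] Hw0 f.
  assert (Sw0 : S w0).
  { apply NNPP; intros Hn. apply Hw0, coeff_notin.
    intros cq Hin Heq. apply Hn. rewrite <- Heq. exact (Hsupp cq Hin). }
  set (g := fun w => if excluded_middle_informative (w = w0)
                     then (f t - lincomb f (ldrop w0 L)) / coeff L w0 else f w).
  destruct (HS g) as [p Hp]. exists p.
  intros w [[Hw Hne] | ->].
  - rewrite <- Hp by assumption. unfold g.
    destruct (excluded_middle_informative (w = w0)); [contradiction | reflexivity].
  - assert (Hdrop : lincomb (evR p) (ldrop w0 L) = lincomb f (ldrop w0 L)).
    { apply lincomb_ext. intros cq Hin. apply In_ldrop in Hin as [Hin Hne].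
      rewrite <- Hp by (apply Hsupp; exact Hin). unfold g.
      destruct (excluded_middle_informative (snd cq = w0)); [contradiction | reflexivity]. }
    rewrite Hrel, (lincomb_split _ _ w0), Hdrop, <- (Hp w0 Sw0). unfold g.
    destruct (excluded_middle_informative (w0 = w0)) as [_|]; [|contradiction].
    field. exact Hw0.
Qed.

Lemma full_maximal (P : Om -> Prop) (t : Om) :
  full P -> box P t -> ~ P t -> goodR (fun w => P w \/ w = t) -> False.
Proof.
  intros [_ Hmax] Hbox Ht Hgood. apply Ht.
  refine (Hmax _ (goodR_good _ Hgood) _ _ t (or_intror eq_refl)).
  - intros w Hw. left. exact Hw.
  - intros w [Hw | ->]; [|exact Hbox].
    repeat split; exists w; split; auto.
Qed.

End Goodness.

Section Construction.
Context {X1 X2 X3 : Type} (c : config X1 X2 X3) (Hc : config_ok c).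
Notation Om := (@Omega X1 X2 X3).

Ltac unpack := destruct Hc as (H1 & H2 & H3 & H4 & H5 & H6 & H7 & H8 & H9).

Lemma x1_y1 : x1 c <> y1 c. Proof. unpack; auto. Qed.
Lemma x2_y2 : x2 c <> y2 c. Proof. unpack; auto. Qed.
Lemma x3_z3 : x3 c <> z3 c. Proof. unpack; auto. Qed.

Lemma al1_base k : (1 <= k)%nat -> al1 c k <> x1 c /\ al1 c k <> y1 c.
Proof. unpack; intros Hk; split; apply H2; auto. Qed.
Lemma al4_base k : (1 <= k)%nat -> al4 c k <> x1 c /\ al4 c k <> y1 c.
Proof. unpack; intros Hk; split; apply H2; auto. Qed.
Lemma al2_base k : (1 <= k)%nat -> al2 c k <> x2 c /\ al2 c k <> y2 c.
Proof. unpack; intros Hk; split; apply H5; auto. Qed.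
Lemma al5_base k : (1 <= k)%nat -> al5 c k <> x2 c /\ al5 c k <> y2 c.
Proof. unpack; intros Hk; split; apply H5; auto. Qed.
Lemma al3_base k : (1 <= k)%nat -> al3 c k <> x3 c /\ al3 c k <> z3 c.
Proof. unpack; intros Hk; apply H8; auto. Qed.

Lemma al1_al4 k l : (1 <= k)%nat -> (1 <= l)%nat -> al1 c k <> al4 c l.
Proof. unpack; intros; apply H3; auto. Qed.
Lemma al2_al5 k l : (1 <= k)%nat -> (1 <= l)%nat -> al2 c k <> al5 c l.
Proof. unpack; intros; apply H6; auto. Qed.

Lemma al1_inj k l : (1 <= k)%nat -> (1 <= l)%nat -> k <> l -> al1 c k <> al1 c l.
Proof. unpack; intros ? ? ? E; apply H3 in E; auto. Qed.
Lemma al4_inj k l : (1 <= k)%nat -> (1 <= l)%nat -> k <> l -> al4 c k <> al4 c l.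
Proof. unpack; intros ? ? ? E; apply H3 in E; auto. Qed.
Lemma al2_inj k l : (1 <= k)%nat -> (1 <= l)%nat -> k <> l -> al2 c k <> al2 c l.
Proof. unpack; intros ? ? ? E; apply H6 in E; auto. Qed.
Lemma al5_inj k l : (1 <= k)%nat -> (1 <= l)%nat -> k <> l -> al5 c k <> al5 c l.
Proof. unpack; intros ? ? ? E; apply H6 in E; auto. Qed.
Lemma al3_inj k l : (1 <= k)%nat -> (1 <= l)%nat -> k <> l -> al3 c k <> al3 c l.
Proof. unpack; intros ? ? ? E; apply H9 in E; auto. Qed.

Ltac distinct1 := first
  [ exact x1_y1 | exact x2_y2 | exact x3_z3
  | apply al1_base; lia | apply al4_base; lia | apply al2_base; lia
  | apply al5_base; lia | apply al3_base; lia
  | apply al1_al4; lia | apply al2_al5; lia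
  | apply al1_inj; lia | apply al4_inj; lia | apply al2_inj; lia
  | apply al5_inj; lia | apply al3_inj; lia ].
Ltac distinct := first [ distinct1 | apply not_eq_sym; distinct1 ].
Ltac distinct_pt := let E := fresh "E" in intro E; injection E; intros;
  match goal with H : ?x = ?y |- _ => contradict H; distinct end.

Ltac simpl_ind := repeat match goal with
  | |- context [@indic ?T ?v ?v] => rewrite (@indic_eq T v)
  | |- context [@indic ?T ?v ?x] => rewrite (@indic_neq T v x) by first [distinct | distinct_pt]
  end.

(* The auxiliary point t_k, outside F_n but in the box of D_k. *)
Definition tpt (k : nat) : Om := (x1 c, x2 c, al3 c k).

(* D_k organised by blocks: a_{5i-1+j} = a_block i j for j < 5. *)
Definition Dset (k : nat) (w : Om) : Prop :=
  w = a c 1 \/ w = a c 2 \/ w = a c 3 \/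
  exists i j, (1 <= i <= k)%nat /\ (j < 5)%nat /\ w = a_block c i j.

Definition swappable (k : nat) (w : Om) : Prop :=
  w = a c 2 \/ w = a c 3 \/ w = a_block c 1 4 \/
  exists i j, (1 <= i <= k)%nat /\ (j < 4)%nat /\ w = a_block c i j.

Ltac block_cases i j := destruct j as [|[|[|[|[|j]]]]]; [..|lia]; destruct i as [|[|i]]; try lia.

Lemma base_inj m m' : (1 <= m <= 3)%nat -> (1 <= m' <= 3)%nat -> a c m = a c m' -> m = m'.
Proof.
  intros Hm Hm'. destruct m as [|[|[|[|m]]]]; try lia; destruct m' as [|[|[|[|m']]]]; try lia;
    cbn; first [reflexivity | distinct_pt].
Qed.

Lemma block_ne_base i j m : (1 <= i)%nat -> (j < 5)%nat -> (1 <= m <= 3)%nat ->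
  a_block c i j <> a c m.
Proof.
  intros Hi Hj Hm. destruct m as [|[|[|[|m]]]]; try lia; block_cases i j; cbn; distinct_pt.
Qed.

Lemma block_inj i i' j j' : (1 <= i)%nat -> (1 <= i')%nat -> (j < 5)%nat -> (j' < 5)%nat ->
  a_block c i j = a_block c i' j' -> i = i' /\ j = j'.
Proof.
  intros Hi Hi' Hj Hj' E. destruct (Nat.eq_dec i i') as [<- | Hne].
  - split; [reflexivity|]. revert E.
    block_cases i j; destruct j' as [|[|[|[|[|j']]]]]; try lia; cbn; first [reflexivity | distinct_pt].
  - exfalso. revert E.
    block_cases i j; destruct j' as [|[|[|[|[|j']]]]]; try lia; destruct i' as [|[|i']]; try lia;
    cbn; distinct_pt.
Qed.

Lemma Dset_ne_block k j w : (1 <= k)%nat -> (j < 5)%nat -> Dset k w -> w <> a_block c (S k) j.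
Proof.
  intros Hk Hj [-> | [-> | [-> | (i & j' & Hi & Hj' & ->)]]];
    try (apply not_eq_sym, block_ne_base; lia).
  intros E. apply block_inj in E; lia.
Qed.

Lemma swappable_Dset k w : swappable k w -> (1 <= k)%nat -> Dset k w.
Proof.
  intros [-> | [-> | [-> | (i & j & Hi & Hj & ->)]]] Hk; unfold Dset; [tauto | tauto | |].
  - right; right; right. exists 1%nat, 4%nat. repeat split; lia.
  - right; right; right. exists i, j. repeat split; lia.
Qed.

Lemma swappable_ne_a1 k w : swappable k w -> w <> a c 1.
Proof.
  intros [-> | [-> | [-> | (i & j & Hi & Hj & ->)]]];
    [intros E; apply base_inj in E; lia .. | apply block_ne_base; lia | apply block_ne_base; lia].
Qed.

Lemma Dset_ne_tpt k m w : (1 <= m)%nat -> Dset k w -> w <> tpt m.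
Proof.
  unfold tpt. intros Hm [-> | [-> | [-> | (i & j & Hi & Hj & ->)]]]; cbn; try distinct_pt.
  block_cases i j; cbn; distinct_pt.
Qed.

Lemma tpt_ne_b m n : tpt m <> b c n.
Proof. unfold tpt, b. distinct_pt. Qed.

(* Functionals supported on the coordinates of blocks k and k+1: weight s on
   block k (cancelling on its points), individual weights on block k+1. *)
Definition Phi (k : nat) (s u1 u4 u2 u5 u3 : R) : fn :=
  Fn (fun x => s * (indic (al1 c k) x + indic (al4 c k) x)
               + u1 * indic (al1 c (S k)) x + u4 * indic (al4 c (S k)) x)
     (fun x => - s * (indic (al2 c k) x + indic (al5 c k) x)
               + u2 * indic (al2 c (S k)) x + u5 * indic (al5 c (S k)) x)
     (fun x => u3 * indic (al3 c (S k)) x).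

Definition psi (k : nat) : fn := Phi k 1 0 0 0 0 0.

Definition Phi_base (cx1 cy1 cA1 cA4 cx2 cy2 cA2 cA5 cx3 cz3 cA3 : R) : fn :=
  Fn (fun x => cx1 * indic (x1 c) x + cy1 * indic (y1 c) x
               + cA1 * indic (al1 c 1) x + cA4 * indic (al4 c 1) x)
     (fun x => cx2 * indic (x2 c) x + cy2 * indic (y2 c) x
               + cA2 * indic (al2 c 1) x + cA5 * indic (al5 c 1) x)
     (fun x => cx3 * indic (x3 c) x + cz3 * indic (z3 c) x + cA3 * indic (al3 c 1) x).

Ltac ev := unfold evR, psi, Phi, Phi_base; cbn -[indic]; simpl_ind; lra.

Lemma Phi_vanish_D k s u1 u4 u2 u5 u3 w : (1 <= k)%nat -> Dset k w ->
  evR (Phi k s u1 u4 u2 u5 u3) w = 0.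
Proof.
  intros Hk [-> | [-> | [-> | (i & j & Hi & Hj & ->)]]]; try ev.
  destruct (Nat.eq_dec i k) as [<- | Hik]; block_cases i j; ev.
Qed.

Lemma psi_vanish_D k n w : (1 <= k)%nat -> Dset n w -> w <> a_block c (S k) 4 ->
  evR (psi k) w = 0.
Proof.
  intros Hk [-> | [-> | [-> | (i & j & Hi & Hj & ->)]]] Hne; try ev.
  destruct (Nat.eq_dec i k) as [<- | Hik]; [block_cases i j; ev|].
  destruct (Nat.eq_dec i (S k)) as [-> | Hik'].
  - destruct k as [|k]; [lia|].
    destruct j as [|[|[|[|[|j]]]]]; [ev | ev | ev | ev | contradiction | lia].
  - block_cases i j; ev.
Qed.

Lemma psi_tpt k m : (1 <= k)%nat -> evR (psi k) (tpt m) = 0.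
Proof. intros Hk. unfold tpt. ev. Qed.

Lemma psi_b_same n : (1 <= n)%nat -> evR (psi n) (b c n) = 1.
Proof. intros Hn. unfold b. ev. Qed.

Lemma psi_b_other k n : (1 <= k)%nat -> (1 <= n)%nat -> k <> n -> evR (psi k) (b c n) = 0.
Proof. intros Hk Hn Hkn. unfold b. ev. Qed.

Lemma psi_witness k : (1 <= k)%nat -> evR (psi k) (al1 c k, x2 c, x3 c) = 1.
Proof. intros Hk. ev. Qed.

Lemma Dset_S k w : Dset (S k) w -> Dset k w \/ exists j, (j < 5)%nat /\ w = a_block c (S k) j.
Proof.
  intros [H | [H | [H | (i & j & Hi & Hj & ->)]]]; [left; unfold Dset; tauto .. |].
  destruct (Nat.eq_dec i (S k)) as [-> | Hik]; [right; eauto|].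
  left. right; right; right. exists i, j. repeat split; lia.
Qed.

Lemma Dset_mono k w : Dset k w -> Dset (S k) w.
Proof.
  intros [H | [H | [H | (i & j & Hi & Hj & ->)]]]; [unfold Dset; tauto .. |].
  right; right; right. exists i, j. repeat split; lia.
Qed.

Lemma Dset_block k j : (1 <= k)%nat -> (j < 5)%nat -> Dset k (a_block c k j).
Proof. intros Hk Hj. right; right; right. exists k, j. repeat split; lia. Qed.

Ltac vanish_list := let w := fresh "w" in let Hw := fresh "Hw" in
  intros w Hw; repeat (destruct Hw as [<- | Hw]; [ev|]); destruct Hw.

Lemma goodR_D_step k : (1 <= k)%nat -> goodR (Dset k) -> goodR (Dset (S k)).
Proof.
  intros Hk HD.
  apply goodR_mono with (S := extend (Dset k)
    [a_block c (S k) 1; a_block c (S k) 2; a_block c (S k) 0; a_block c (S k) 3; a_block c (S k) 4]).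
  { intros w Hw. destruct (Dset_S k w Hw) as [Hw' | (j & Hj & ->)]; [left; exact Hw' | right].
    destruct j as [|[|[|[|[|j]]]]]; [..|lia]; simpl; tauto. }
  assert (HvD : forall s u1 u4 u2 u5 u3 w, Dset k w -> evR (Phi k s u1 u4 u2 u5 u3) w = 0)
    by (intros; apply Phi_vanish_D; assumption).
  destruct k as [|k]; [lia|].
  apply (goodR_extend _ _ _ (Phi (S k) 1 0 1 (-1) 0 1)); [| apply HvD | vanish_list | ev].
  apply (goodR_extend _ _ _ (Phi (S k) 0 0 0 0 1 0)); [| apply HvD | vanish_list | ev].
  apply (goodR_extend _ _ _ (Phi (S k) 0 1 0 0 0 0)); [| apply HvD | vanish_list | ev].
  apply (goodR_extend _ _ _ (Phi (S k) 0 0 1 0 0 0)); [| apply HvD | vanish_list | ev].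
  apply (goodR_extend _ _ _ (Phi (S k) 0 0 0 0 0 1)); [| apply HvD | vanish_list | ev].
  apply goodR_mono with (S := Dset (S k)); [intros w [Hw | []]; exact Hw | exact HD].
Qed.

Lemma goodR_D1 : goodR (Dset 1).
Proof.
  apply goodR_mono with (S := extend (fun _ => False)
    [a_block c 1 4; a_block c 1 3; a_block c 1 2; a_block c 1 1; a_block c 1 0; a c 3; a c 2; a c 1]).
  { intros w [-> | [-> | [-> | (i & j & Hi & Hj & ->)]]]; right; [simpl; tauto .. |].
    replace i with 1%nat by lia. destruct j as [|[|[|[|[|j]]]]]; [..|lia]; simpl; tauto. }
  apply (goodR_extend _ _ _ (Phi_base (-2) 0 1 0 2 0 0 1 0 (-2) (-1))); [| intros _ [] | vanish_list | ev].
  apply (goodR_extend _ _ _ (Phi_base 0 0 0 (-1) 0 0 (-1) 0 0 0 1)); [| intros _ [] | vanish_list | ev].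
  apply (goodR_extend _ _ _ (Phi_base 0 0 0 (-1) 0 0 0 1 0 0 0)); [| intros _ [] | vanish_list | ev].
  apply (goodR_extend _ _ _ (Phi_base 0 0 0 1 0 0 0 0 0 0 0)); [| intros _ [] | vanish_list | ev].
  apply (goodR_extend _ _ _ (Phi_base 0 0 1 0 0 0 0 0 0 0 0)); [| intros _ [] | vanish_list | ev].
  apply (goodR_extend _ _ _ (Phi_base 0 0 0 0 0 0 0 0 0 1 0)); [| intros _ [] | vanish_list | ev].
  apply (goodR_extend _ _ _ (Phi_base 0 1 0 0 0 0 0 0 0 0 0)); [| intros _ [] | vanish_list | ev].
  apply (goodR_extend _ _ _ (Phi_base 1 0 0 0 0 0 0 0 0 0 0)); [| intros _ [] | vanish_list | ev].
  apply goodR_mono with (S := fun _ => False); [intros w [[] | []] | exact goodR_empty].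
Qed.

Lemma goodR_D k : (1 <= k)%nat -> goodR (Dset k).
Proof.
  induction k as [|k IH]; intros Hk; [lia|].
  destruct (Nat.eq_dec k 0) as [-> | Hk0]; [exact goodR_D1|].
  apply goodR_D_step; [lia | apply IH; lia].
Qed.

Lemma swappable_S k w : swappable (S k) w ->
  swappable k w \/ exists j, (j < 4)%nat /\ w = a_block c (S k) j.
Proof.
  intros [H | [H | [H | (i & j & Hi & Hj & ->)]]]; [left; unfold swappable; tauto .. |].
  destruct (Nat.eq_dec i (S k)) as [-> | Hik]; [right; eauto|].
  left. right; right; right. exists i, j. repeat split; lia.
Qed.

Definition tpt_relation (k : nat) : Prop :=
  exists L, spans (Dset k) (tpt k) L /\ forall w, swappable k w -> coeff L w <> 0.

(* 3 t_1 = 2a_1 - a_2 + a_3 + a_4 + a_5 - a_6 - a_7 + a_8. *)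
Lemma tpt_relation_1 : tpt_relation 1.
Proof.
  exists [(2/3, a c 1); (-1/3, a c 2); (1/3, a c 3); (1/3, a_block c 1 0);
          (1/3, a_block c 1 1); (-1/3, a_block c 1 2); (-1/3, a_block c 1 3); (1/3, a_block c 1 4)].
  split; [split|].
  - intros cq Hin.
    repeat (destruct Hin as [<- | Hin];
            [cbn [snd]; first [apply Dset_block; lia | unfold Dset; tauto] |]).
    destruct Hin.
  - intros p. unfold evR, tpt, lincomb. cbn. lra.
  - intros w [-> | [-> | [-> | (i & j & Hi & Hj & ->)]]];
      [| | | replace i with 1%nat by lia; destruct j as [|[|[|[|j]]]]; [..|lia]];
      unfold coeff, lincomb; cbn -[indic]; simpl_ind; lra.
Qed.

(* 2 t_{k+1} = t_k + a_1 + a_{5k+4} + a_{5k+5} - a_{5k+6} - a_{5k+7}: old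
   coefficients are halved and the new swappable points get +-1/2. *)
Lemma tpt_relation_step k : (1 <= k)%nat -> tpt_relation k -> tpt_relation (S k).
Proof.
  intros Hk (L & [Hsupp Hrel] & Hcoeff).
  set (N := [(1/2, a c 1); (1/2, a_block c (S k) 0); (1/2, a_block c (S k) 1);
             (-1/2, a_block c (S k) 2); (-1/2, a_block c (S k) 3)]).
  assert (HN : forall cq, In cq N ->
            snd cq = a c 1 \/ exists j, (j < 4)%nat /\ snd cq = a_block c (S k) j).
  { intros cq Hin.
    repeat (destruct Hin as [<- | Hin];
            [first [left; reflexivity | right; eexists; split; [|reflexivity]; lia] |]).
    destruct Hin. }
  exists (lscale (1/2) L ++ N). split; [split|].
  - intros cq Hin. apply in_app_or in Hin as [Hin | Hin].
    + apply in_map_iff in Hin as ([c0 q] & <- & Hin). apply Dset_mono, (Hsupp _ Hin).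
    + destruct (HN cq Hin) as [-> | (j & Hj & ->)]; [left; reflexivity | apply Dset_block; lia].
  - intros p. rewrite lincomb_app, lincomb_scale, <- Hrel.
    destruct k as [|k]; [lia|]. unfold evR, tpt, N, lincomb. cbn. lra.
  - intros w Hw. unfold coeff at 1.
    rewrite lincomb_app, lincomb_scale. fold (coeff L w) (coeff N w).
    destruct (swappable_S k w Hw) as [Hold | (j & Hj & ->)].
    + rewrite (coeff_notin N w).
      * specialize (Hcoeff w Hold). lra.
      * intros cq Hin. destruct (HN cq Hin) as [-> | (j & Hj & ->)].
        -- apply not_eq_sym, (swappable_ne_a1 k), Hold.
        -- apply not_eq_sym, Dset_ne_block; [lia | lia | apply swappable_Dset; assumption].
    + rewrite (coeff_notin L).
      2:{ intros cq Hin. apply Dset_ne_block; [lia | lia | apply Hsupp, Hin]. }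
      destruct k as [|k]; [lia|]. unfold N, coeff, lincomb.
      destruct j as [|[|[|[|j]]]]; [..|lia]; cbn -[indic]; simpl_ind; lra.
Qed.

Lemma tpt_relation_all k : (1 <= k)%nat -> tpt_relation k.
Proof.
  induction k as [|k IH]; intros Hk; [lia|].
  destruct (Nat.eq_dec k 0) as [-> | Hk0]; [exact tpt_relation_1|].
  apply tpt_relation_step; [lia | apply IH; lia].
Qed.

Lemma goodR_swap k w0 : (1 <= k)%nat -> swappable k w0 -> goodR (exch (Dset k) w0 (tpt k)).
Proof.
  intros Hk Hw0. destruct (tpt_relation_all k Hk) as (L & HL & Hcoeff).
  apply goodR_exch with (L := L); [apply goodR_D; exact Hk | exact HL | apply Hcoeff, Hw0].
Qed.

Lemma a_blockE q r : (r < 5)%nat -> a c (5 * q + 4 + r) = a_block c (S q) r.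
Proof.
  intros Hr.
  replace (5 * q + 4 + r)%nat with (S (S (S (S (5 * q + r)))))%nat by lia.
  unfold a. replace (S (S (S (S (5 * q + r)))) - 4)%nat with (5 * q + r)%nat by lia.
  rewrite <- (Nat.div_unique (5 * q + r) 5 q r), <- (Nat.mod_unique (5 * q + r) 5 q r) by lia.
  reflexivity.
Qed.

Lemma index_cases i : (1 <= i)%nat ->
  (1 <= i <= 3)%nat \/ exists q r, (r < 5)%nat /\ i = (5 * q + 4 + r)%nat.
Proof.
  intros Hi. destruct (le_lt_dec 4 i) as [H|H]; [right | left; lia].
  exists ((i - 4) / 5)%nat, ((i - 4) mod 5)%nat. split.
  - apply Nat.mod_upper_bound; lia.
  - pose proof (Nat.div_mod (i - 4) 5 ltac:(lia)). lia.
Qed.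

Lemma F_Dset n w : F c n w -> Dset n w \/ w = b c n.
Proof.
  intros [(m & Hm & ->) | Hb]; [left | right; exact Hb].
  destruct (index_cases m ltac:(lia)) as [Hm' | (q & r & Hr & ->)].
  - destruct m as [|[|[|[|m]]]]; try lia; unfold Dset; tauto.
  - rewrite a_blockE by exact Hr. right; right; right. exists (S q), r. repeat split; lia.
Qed.

Lemma last_point n : (1 <= n)%nat -> a c (5 * n + 3) = a_block c n 4.
Proof.
  intros Hn. replace (5 * n + 3)%nat with (5 * (n - 1) + 4 + 4)%nat by lia.
  rewrite a_blockE by lia. f_equal; lia.
Qed.

Lemma a_inj i j : (1 <= i)%nat -> (1 <= j)%nat -> a c i = a c j -> i = j.
Proof.
  intros Hi Hj E.
  destruct (index_cases i Hi) as [Hi' | (q & r & Hr & ->)];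
  destruct (index_cases j Hj) as [Hj' | (q' & r' & Hr' & ->)];
  rewrite ?(a_blockE q r Hr), ?(a_blockE q' r' Hr') in E.
  - exact (base_inj i j Hi' Hj' E).
  - exfalso. apply (block_ne_base (S q') r' i); [lia | exact Hr' | exact Hi' | symmetry; exact E].
  - exfalso. apply (block_ne_base (S q) r j); [lia | exact Hr | exact Hj' | exact E].
  - apply block_inj in E; lia.
Qed.

Lemma a_ne_b n i : (1 <= i)%nat -> a c i <> b c n.
Proof.
  intros Hi. unfold b.
  destruct (index_cases i Hi) as [Hi' | (q & r & Hr & ->)].
  - destruct i as [|[|[|[|i]]]]; try lia; cbn; distinct_pt.
  - rewrite a_blockE by exact Hr.
    destruct r as [|[|[|[|[|r]]]]]; try lia; destruct q as [|q]; cbn; distinct_pt.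
Qed.

Lemma missing_index n w : (1 <= n)%nat -> Dset n w -> ~ swappable n w ->
  w <> a c 1 -> w <> a_block c n 4 -> exists k, (1 <= k < n)%nat /\ w = a_block c (S k) 4.
Proof.
  intros Hn [-> | [-> | [-> | (i & j & Hi & Hj & ->)]]] Hsw Ha1 Hlast;
    [contradiction | exfalso; apply Hsw; unfold swappable; tauto .. |].
  destruct (le_lt_dec 4 j) as [Hj4 | Hj4].
  2:{ exfalso. apply Hsw. right; right; right. exists i, j. repeat split; lia. }
  replace j with 4%nat in * by lia.
  destruct (Nat.eq_dec i 1) as [-> | Hi1]; [exfalso; apply Hsw; unfold swappable; tauto|].
  destruct (Nat.eq_dec i n) as [-> | Hin]; [contradiction|].
  exists (i - 1)%nat. split; [lia|]. f_equal. lia.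
Qed.

Section FullSubsets.
Variables (n : nat) (P : Om -> Prop).
Hypotheses (Hn : (1 <= n)%nat) (HP : full P) (HPF : forall v, P v -> Dset n v \/ v = b c n)
  (Ha1 : P (a c 1)) (Hlast : P (a_block c n 4)).

(* If a swappable w were missing, P + t_n would lie in (D_n - w + t_n) + b_n. *)
Lemma full_contains_swappable w : swappable n w -> P w.
Proof.
  intros Hw. apply NNPP. intros HwP.
  apply (full_maximal P (tpt n) HP).
  - split; [|split]; [exists (a c 1) .. | exists (a_block c n 4)]; split; auto.
  - intros Ht. destruct (HPF _ Ht) as [HD | Hb].
    + exact (Dset_ne_tpt n n _ Hn HD eq_refl).
    + exact (tpt_ne_b n n Hb).
  - apply goodR_mono with (S := fun v => exch (Dset n) w (tpt n) v \/ v = b c n).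
    { intros v [Hv | ->]; [|left; right; reflexivity].
      destruct (HPF v Hv) as [HD | ->]; [|right; reflexivity].
      left; left. split; [exact HD | intros ->; contradiction]. }
    apply goodR_add with (p := psi n);
      [apply goodR_swap; assumption | | rewrite psi_b_same by exact Hn; lra].
    intros v [[HD _] | ->]; [apply Phi_vanish_D; assumption | apply psi_tpt, Hn].
Qed.

(* Otherwise P could absorb (alpha_{5k-4}, x2, x3). *)
Lemma full_psi_nonvanishing k : (1 <= k <= n)%nat -> ~ (forall v, P v -> evR (psi k) v = 0).
Proof.
  intros Hk Hvan.
  apply (full_maximal P (al1 c k, x2 c, x3 c) HP).
  - split; [|split]; [exists (a_block c k 0) | exists (a c 1) ..]; split; auto.
    apply full_contains_swappable. right; right; right. exists k, 0%nat. repeat split; lia.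
  - intros Hu. apply Hvan in Hu. rewrite psi_witness in Hu by lia; lra.
  - apply goodR_add with (p := psi k);
      [apply good_goodR, HP | exact Hvan | rewrite psi_witness by lia; lra].
Qed.

(* A missing a_{5k+8} (resp. b_n) would make psi_k (resp. psi_n) vanish on P. *)
Lemma full_contains_F w0 : Dset n w0 \/ w0 = b c n -> P w0.
Proof.
  intros Hw0. apply NNPP. intros Hw0P.
  destruct Hw0 as [HD | ->].
  - destruct (missing_index n w0 Hn HD) as (k & Hk & ->).
    + intros Hsw. exact (Hw0P (full_contains_swappable w0 Hsw)).
    + intros ->. contradiction.
    + intros ->. contradiction.
    + apply (full_psi_nonvanishing k); [lia|]. intros v Hv.
      destruct (HPF v Hv) as [HD' | ->].
      * apply psi_vanish_D with (n := n); [lia | exact HD' | intros ->; contradiction].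
      * apply psi_b_other; lia.
  - apply (full_psi_nonvanishing n); [lia|]. intros v Hv.
    destruct (HPF v Hv) as [HD | ->]; [|contradiction].
    apply psi_vanish_D with (n := n); [exact Hn | exact HD |].
    apply Dset_ne_block; [exact Hn | lia | exact HD].
Qed.
End FullSubsets.


Lemma no_proper_full n P : (1 <= n)%nat -> subset P (F c n) -> (exists w, F c n w /\ ~ P w) ->
  P (a c 1) -> P (a c (5 * n + 3)) -> ~ full P.
Proof.
  intros Hn HPF (w0 & Hw0 & Hw0P) Ha1 Hlast HP.
  rewrite last_point in Hlast by exact Hn.
  apply Hw0P, (full_contains_F n P Hn HP);
    [intros v Hv; apply F_Dset, HPF, Hv | exact Ha1 | exact Hlast | apply F_Dset, Hw0].
Qed.
End Construction.

Close Scope R_scope.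

Theorem mainTheorem7 :
  forall (X1 X2 X3 : Type) (c : config X1 X2 X3), config_ok c ->
  forall n : nat, (1 <= n)%nat ->
    (* no proper subset of F_n containing a_1 and a_{5n+3} is full *)
    (forall P : @Omega X1 X2 X3 -> Prop,
        subset P (F c n) -> (exists w, F c n w /\ ~ P w) ->
        P (a c 1) -> P (a c (5 * n + 3)) -> ~ full P) /\
    (* consequently, if F_n is full, every full subset of F_n containing
       a_1 and a_{5n+3} is F_n itself (the geodesic is all of F_n) *)
    (full (F c n) ->
       forall P : @Omega X1 X2 X3 -> Prop,
         subset P (F c n) -> full P -> P (a c 1) -> P (a c (5 * n + 3)) ->
         forall w, P w <-> F c n w) /\
    (* F_n has exactly 5n+4 points: a_1,...,a_{5n+3}, b_n pairwise distinct *)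
    (forall i j, (1 <= i <= 5 * n + 3)%nat -> (1 <= j <= 5 * n + 3)%nat ->
        a c i = a c j -> i = j) /\
    (forall i, (1 <= i <= 5 * n + 3)%nat -> a c i <> b c n).
Proof.
  intros X1 X2 X3 c Hc n Hn. split; [|split; [|split]].
  - intros P. exact (no_proper_full c Hc n P Hn).
  - intros _ P HPF HP Ha1 Hlast w. split; [apply HPF|].
    intros Hw. apply NNPP. intros HwP.
    exact (no_proper_full c Hc n P Hn HPF (ex_intro _ w (conj Hw HwP)) Ha1 Hlast HP).
  - intros i j Hi Hj. apply (a_inj c Hc); lia.
  - intros i Hi. apply (a_ne_b c Hc); lia.
Qed.
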